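(* Let $(\mathsf K,\mathsf D)$ be a differential ring, $n\ge1$, $L=\sum_{i=0}^n\binom{n}{i}a_i\mathsf D^{n-i}\in\mathsf K\langle\mathsf D\rangle$ with $a_0=1$, and $f\in\mathsf K^\times$. Put $u:=f^{-1}\mathsf D(f)$ and write $$f^{-1}Lf=\sum_{k=0}^n\binom nk\tilde a_k\mathsf D^{n-k}.$$ Then for each $k=0,1,\dots,n$, $$\tilde a_k=\sum_{j=0}^k\binom kj\,(f^{-1}a_{k-j}f)\,P_j(u).$$
   Context: $(\mathsf K,\mathsf D)$: unital associative ring with derivation; $\mathsf K\langle\mathsf D\rangle$: Ore algebra, coefficients on the left, $\mathsf D a=a\mathsf D+\mathsf D(a)$. For $u\in\mathsf K$ the noncommutative Bell polynomials $P_m(u)\in\mathsf K$ are defined by $P_0(u)=1$, $P_{m+1}(u)=\mathsf D(P_m(u))+u\,P_m(u)$. *)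

From HB Require Import structures.
From mathcomp Require Import all_boot all_order all_algebra.
Set Implicit Arguments. Unset Strict Implicit. Unset Printing Implicit Defensive.
Import GRing.Theory.
Local Open Scope ring_scope.

(* The Ore algebra K<D> is represented on the carrier {poly K}: the operator
   sum_i p_i D^i (coefficients on the left) is the polynomial with coefficients
   p`_i.  Only the additive structure and left scaling c *: p (coefficientwise
   left multiplication by c) of {poly K} are used; the product of K<D> is
   [oremul D] below, NOT the polynomial product. *)

(* left multiplication by D:  D * (sum_i p_i D^i) = sum_i (p_i D^(i+1) + D(p_i) D^i),
   which is the rule  D a = a D + D(a). *)
Definition Dmul (K : nzRingType) (D : K -> K) (p : {poly K}) : {poly K} :=
  'X * p + map_poly D p.

Definition oremul (K : nzRingType) (D : K -> K) (p q : {poly K}) : {poly K} :=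
  \sum_(i < size p) p`_i *: iter i (Dmul D) q.

Fixpoint bellP (K : nzRingType) (D : K -> K) (m : nat) (u : K) : K :=
  match m with
  | 0 => 1
  | m'.+1 => D (bellP D m' u) + u * bellP D m' u
  end.

From HB Require Import structures.
From mathcomp Require Import all_boot all_order all_algebra ring.
Set Implicit Arguments.
Unset Strict Implicit.
Unset Printing Implicit Defensive.

Import GRing.Theory.
Local Open Scope ring_scope.

(* By the Leibniz rule  D^m g = sum_i C(m, i) D^(m-i)(g) D^i  in K<D>, the
   coefficient of D^(n-k) in f^-1 L f is a sum of terms
   f^-1 a_(k-j) D^j(f) = (f^-1 a_(k-j) f) (f^-1 D^j(f))  with binomial weights.
   The identity  f^-1 D^j(f) = P_j(u)  follows by induction from
   D(f^-1) = - f^-1 D(f) f^-1, and the weights agree by the trinomial revision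
   C(n, k-j) C(n-k+j, j) = C(n, k) C(k, j). *)

Section OreConjugation.

Variables (K : nzRingType) (D : K -> K).
Hypothesis D_add : forall x y, D (x + y) = D x + D y.

Lemma derivation0 : D 0 = 0.
Proof. by apply: (addrI (D 0)); rewrite -D_add !addr0. Qed.

Lemma derivationMn x m : D (x *+ m) = D x *+ m.
Proof.
by elim: m => [|m IHm]; rewrite ?mulr0n ?derivation0 // !mulrS D_add IHm.
Qed.

Lemma coef_Dmul p i :
  (Dmul D p)`_i = (if i == 0%N then 0 else p`_i.-1) + D p`_i.
Proof. by rewrite /Dmul coefD coefXM coef_map_id0 // derivation0. Qed.

Lemma coef_iter_DmulC m g i :
  (iter m (Dmul D) g%:P)`_i = 'C(m, i)%:R * iter (m - i) D g.
Proof.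
elim: m i => [|m IHm] [|i] /=; rewrite ?coefC ?bin0 ?mul1r ?mul0r //.
  by rewrite coef_Dmul IHm /= bin0 mul1r subn0 add0r.
rewrite coef_Dmul /= !IHm binS natrD mulrDl addrC; congr (_ + _).
have [lt_im | le_mi] := ltnP i m.
  by rewrite !mulr_natl derivationMn subSS -(subnSK lt_im).
by rewrite bin_small // !mul0r derivation0.
Qed.

Lemma oremulE N (p q : {poly K}) : (size p <= N)%N ->
  oremul D p q = \sum_(d < N) p`_d *: iter d (Dmul D) q.
Proof.
move=> le_pN; rewrite /oremul.
rewrite (big_ord_widen _ (fun d => p`_d *: iter d (Dmul D) q) le_pN) big_mkcond.
apply: eq_bigr => d _.
by case: ltnP => // le_pd; rewrite nth_default // scale0r.
Qed.

Lemma oremulCl c (p : {poly K}) : oremul D c%:P p = c *: p.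
Proof.
by rewrite (@oremulE 1) ?size_polyC ?leq_b1 // big_ord1 coefC.
Qed.

Lemma coef_oremulC N (p : {poly K}) g i : (size p <= N)%N ->
  (oremul D p g%:P)`_i =
    \sum_(t < N - i) p`_(i + t) * ('C(i + t, i)%:R * iter t D g).
Proof.
move=> le_pN; rewrite (@oremulE N p g%:P le_pN) coef_sum.
under eq_bigr do rewrite coefZ coef_iter_DmulC.
have [le_Ni | lt_iN] := leqP N i.
  rewrite (eqP le_Ni) big_ord0 big1 // => d _.
  by rewrite bin_small ?(leq_trans (ltn_ord d)) // mul0r mulr0.
have [k ->] : exists k, N = (i + k)%N by exists (N - i)%N; rewrite subnKC // ltnW.
rewrite addKn big_split_ord /= big1 ?add0r => [|d _].
  by apply: eq_bigr => t _; rewrite addKn.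
by rewrite bin_small // mul0r mulr0.
Qed.

End OreConjugation.

Section LogarithmicDerivative.

Variables (K : unitRingType) (D : K -> K).
Hypothesis D_mul : forall x y, D (x * y) = D x * y + x * D y.

Lemma derivation1 : D 1 = 0.
Proof. by apply: (addrI (D 1)); rewrite addr0 -{3}(mulr1 1) D_mul mulr1 mul1r. Qed.

Lemma derivationV f : f \is a GRing.unit -> D f^-1 = - (f^-1 * D f * f^-1).
Proof.
move=> Uf; rewrite -[D f^-1](mulrK Uf) -mulNr; congr (_ * _).
by apply/eqP; rewrite -addr_eq0 -D_mul mulVr // derivation1.
Qed.

Lemma bellP_logderivative f j : f \is a GRing.unit ->
  bellP D j (f^-1 * D f) = f^-1 * iter j D f.
Proof.
move=> Uf; elim: j => [|j IHj] /=; first by rewrite mulVr.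
by rewrite IHj D_mul derivationV // !mulrA mulNr addrC addrA subrr add0r.
Qed.

End LogarithmicDerivative.

Lemma bin_fact_add a b : ('C(a + b, a) * (a`! * b`!) = (a + b)`!)%N.
Proof. by rewrite -{2}(addKn a b) bin_fact ?leq_addr. Qed.

Lemma bin_trinomial a b c :
  ('C(a + b + c, c) * 'C(a + b, a) = 'C(b + c, b) * 'C(a + b + c, b + c))%N.
Proof.
have fact_ab := bin_fact_add a b; have fact_bc := bin_fact_add b c.
have fact_c_ab := bin_fact_add c (a + b); rewrite [(c + _)%N]addnC in fact_c_ab.
have fact_bc_a := bin_fact_add (b + c) a.
rewrite (addnC (b + c)%N a) addnA in fact_bc_a.
have fact_pos : (0 < a`! * b`! * c`!)%N by rewrite !muln_gt0 !fact_gt0.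
apply/eqP; rewrite -(eqn_pmul2r fact_pos); apply/eqP.
transitivity ('C(a + b + c, c) * (c`! * ('C(a + b, a) * (a`! * b`!))))%N.
  by ring.
rewrite fact_ab fact_c_ab.
transitivity ('C(a + b + c, b + c) * (('C(b + c, b) * (b`! * c`!)) * a`!))%N.
  by rewrite fact_bc fact_bc_a.
by ring.
Qed.

Lemma poly_def_rev (K : nzRingType) n (c : nat -> K) :
  \poly_(j < n.+1) c (n - j)%N = \sum_(i < n.+1) c i *: 'X^(n - i).
Proof.
rewrite poly_def (reindex_inj rev_ord_inj) /=; apply: eq_bigr => i _.
by rewrite subKn // -ltnS.
Qed.

Lemma coef_sum_Xsub (K : nzRingType) n (c : nat -> K) i :
  (\sum_(k < n.+1) c k *: 'X^(n - k))`_i = if (i <= n)%N then c (n - i)%N else 0.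
Proof. by rewrite -poly_def_rev coef_poly ltnS. Qed.

Lemma size_sum_Xsub (K : nzRingType) n (c : nat -> K) :
  (size (\sum_(k < n.+1) c k *: 'X^(n - k))%R <= n.+1)%N.
Proof. by rewrite -poly_def_rev size_poly. Qed.

Theorem mainTheorem3 (K : unitRingType) (D : K -> K)
  (D_add : forall x y, D (x + y) = D x + D y)
  (D_mul : forall x y, D (x * y) = D x * y + x * D y)
  (n : nat) (Hn : (1 <= n)%N) (a : nat -> K) (Ha0 : a 0%N = 1)
  (f : K) (Hf : f \is a GRing.unit) :
  let L : {poly K} := \sum_(i < n.+1) ('C(n, i)%:R * a i) *: 'X^(n - i) in
  let u : K := f^-1 * D f in
  oremul D (oremul D (f^-1)%:P L) f%:P =
    \sum_(k < n.+1)
      ('C(n, k)%:R *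
        (\sum_(j < k.+1) 'C(k, j)%:R * (f^-1 * a (k - j)%N * f) * bellP D j u))
      *: 'X^(n - k).
Proof.
move=> L u.
have coef_L d : (d <= n)%N -> L`_d = 'C(n, n - d)%:R * a (n - d)%N.
  by move=> le_dn; rewrite (coef_sum_Xsub n (fun k => 'C(n, k)%:R * a k)) le_dn.
have size_fL : (size (f^-1 *: L) <= n.+1)%N.
  apply: leq_trans (size_scale_leq _ _) _.
  exact: size_sum_Xsub n (fun k => 'C(n, k)%:R * a k).
pose c k := 'C(n, k)%:R *
  (\sum_(j < k.+1) 'C(k, j)%:R * (f^-1 * a (k - j)%N * f) * bellP D j u).
rewrite oremulCl; apply/polyP => i.
rewrite (coef_oremulC D_add _ _ size_fL) (coef_sum_Xsub n c) {}/c.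
have [le_in | lt_ni] := leqP i n; last by rewrite (eqP lt_ni) big_ord0.
have [k def_n] : exists k, n = (i + k)%N by exists (n - i)%N; rewrite subnKC.
subst n.
rewrite -addnS !addKn mulr_sumr; apply: eq_bigr => -[t /= lt_tk] _.
rewrite coefZ coef_L ?leq_add2l // subnDl.
have [s ->] : exists s, k = (t + s)%N by exists (k - t)%N; rewrite subnKC.
rewrite !addKn !addnA bellP_logderivative //.
rewrite !mulr_natl !(mulrnAr, mulrnAl) -!mulrnA !mulrA mulrK //.
by rewrite bin_trinomial mulnC.
Qed.
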